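(* Let $R$ be a commutative ring in which $2$ is invertible, let $Q=R$ with quadratic form $q(z)=z^2$, and let $m\ge1$. Identify automorphisms of $Q\perp\mathbb{H}(R)^m$ with matrices in $\mathrm{GL}_{2m+1}(R)$ via the ordered basis $(1,x_1,f_1,x_2,f_2,\dots,x_m,f_m)$. Then $\mathrm{EO}_R(Q,\mathbb{H}(R)^m)=\mathrm{EO}_{2m+1}(R)$.
   Context: For a quadratic form $q$ the bilinear form is $\langle x,y\rangle=q(x+y)-q(x)-q(y)$; thus on $Q=R$, $\langle z,z'\rangle=2zz'$. $\mathbb{H}(R)^m=\mathbb{H}(R^m)=R^m\oplus (R^m)^*$ with basis $x_1,\dots,x_m$ and dual basis $f_1,\dots,f_m$, and $q(y,g)=g(y)$; orthogonal sums carry the sum of forms. With respect to the basis above, the bilinear form on $Q\perp\mathbb{H}(R)^m$ has matrix $(2)\perp\widetilde{\psi}_m$, where $\widetilde{\psi}_s=\sum_{i=1}^s(e_{2i-1,2i}+e_{2i,2i-1})$ and $e_{i,j}$ are matrix units. DSER transformations on $Q\perp\mathbb{H}(P)$: for $\alpha:Q\to P$ let $\alpha^*:P^*\to Q$ satisfy $\langle\alpha^*(g),z\rangle=g(\alpha(z))$ and $E_\alpha(z,y,g)=(z-\alpha^*(g),y+\alpha(z)-\tfrac12\alpha\alpha^*(g),g)$; for $\beta:Q\to P^*$ let $\beta^*:P\to Q$ satisfy $\langle\beta^*(y),z\rangle=\beta(z)(y)$ and $E^*_\beta(z,y,g)=(z-\beta^*(y),y,g+\beta(z)-\tfrac12\beta\beta^*(y))$.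 $\mathrm{EO}_R(Q,\mathbb{H}(P))$ is generated by all $E_\alpha,E^*_\beta$. Odd elementary orthogonal group: for $N=2s+1$ (indices $1,\dots,2s+1$) and $1\le i\le s$, $\lambda\in R$, let $F^1_i(\lambda)=I_N+\lambda(e_{1,2i+1}-2e_{2i,1}-\lambda e_{2i,2i+1})$ and $F^2_i(\lambda)=I_N+\lambda(e_{1,2i}-2e_{2i+1,1}-\lambda e_{2i+1,2i})$ (orthogonal for $(2)\perp\widetilde{\psi}_s$). $\mathrm{EO}_{2s+1}(R)$ is the group generated by all $F^1_i(\lambda),F^2_i(\lambda)$, $\lambda\in R$. *)

From HB Require Import structures.
From mathcomp Require Import all_boot all_order all_algebra.
Set Implicit Arguments. Unset Strict Implicit. Unset Printing Implicit Defensive.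
Import Order.TTheory GRing.Theory Num.Theory.
Local Open Scope ring_scope.

Section Defs.
Variable (R : comUnitRingType) (m : nat).

(* Elements of Q _|_ H(R^m) = R (+) R^m (+) (R^m)^* , written as triples
   (z, y, g): y is given by its coordinates on x_1..x_m, g by its
   coordinates on the dual basis f_1..f_m. *)
Definition elt := (R * 'rV[R]_m * 'rV[R]_m)%type.

Definition dpair (g y : 'rV[R]_m) : R := \sum_(i < m) g 0 i * y 0 i.

(* bilinear form on Q = R (q(z) = z^2): <z,z'> = 2 z z' *)
Definition bQ (z z' : R) : R := 2%:R * z * z'.

Definition half : R := (2%:R)^-1.

Definition E_alpha (alpha : R -> 'rV[R]_m) (alphas : 'rV[R]_m -> R) (v : elt) : elt :=
  let: (z, y, g) := v in
  (z - alphas g, y + alpha z - half *: alpha (alphas g), g).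

Definition E_beta (beta : R -> 'rV[R]_m) (betas : 'rV[R]_m -> R) (v : elt) : elt :=
  let: (z, y, g) := v in
  (z - betas y, y, g + beta z - half *: beta (betas y)).

Definition linR (f : R -> 'rV[R]_m) : Prop :=
  (forall z z', f (z + z') = f z + f z') /\ (forall c z, f (c * z) = c *: f z).

(* ordered basis (1, x_1, f_1, ..., x_m, f_m), indexed by ordinals 0..2m:
   index 0 <-> 1 in Q, index 2i+1 <-> x_(i+1), index 2i+2 <-> f_(i+1) *)
Definition coord (k : 'I_((2 * m).+1)) (v : elt) : R :=
  let: (z, y, g) := v in
  if (k == 0 :> nat) then z
  else \sum_(i < m) (if (k == (2 * i).+1 :> nat) then y 0 i
                     else if (k == (2 * i).+2 :> nat) then g 0 i else 0).

Definition basis_elt (l : 'I_((2 * m).+1)) : elt :=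
  ((l == 0 :> nat)%:R,
   \row_(i < m) (l == (2 * i).+1 :> nat)%:R,
   \row_(i < m) (l == (2 * i).+2 :> nat)%:R).

(* matrix of an endomorphism w.r.t. the ordered basis (columns = images) *)
Definition mx_of (f : elt -> elt) : 'M[R]_((2 * m).+1) :=
  \matrix_(k, l) coord k (f (basis_elt l)).

Inductive gen_grp (n : nat) (S : 'M[R]_n -> Prop) : 'M[R]_n -> Prop :=
| gen_one : gen_grp S 1%:M
| gen_el A : S A -> gen_grp S A
| gen_mul A B : gen_grp S A -> gen_grp S B -> gen_grp S (A *m B)
| gen_inv A : gen_grp S A -> gen_grp S (invmx A).

Definition EO_R_gens (M : 'M[R]_((2 * m).+1)) : Prop :=
  (exists (alpha : R -> 'rV[R]_m) (alphas : 'rV[R]_m -> R),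
      linR alpha /\ (forall g z, bQ (alphas g) z = dpair g (alpha z)) /\
      M = mx_of (E_alpha alpha alphas))
  \/
  (exists (beta : R -> 'rV[R]_m) (betas : 'rV[R]_m -> R),
      linR beta /\ (forall y z, bQ (betas y) z = dpair (beta z) y) /\
      M = mx_of (E_beta beta betas)).

Definition EO_R : 'M[R]_((2 * m).+1) -> Prop := gen_grp EO_R_gens.

Definition munit (a b : nat) : 'M[R]_((2 * m).+1) :=
  \matrix_(k, l) ((k == a :> nat) && (l == b :> nat))%:R.

(* paper's F^1_i(lambda), F^2_i(lambda) for i = j+1, 0 <= j < m; paper index p
   is 0-based index p-1, so paper indices 1, 2i, 2i+1 are 0, 2j+1, 2j+2 *)
Definition F1 (j : nat) (lam : R) : 'M[R]_((2 * m).+1) :=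
  1%:M + lam *: (munit 0 (2 * j).+2 - 2%:R *: munit (2 * j).+1 0
                 - lam *: munit (2 * j).+1 (2 * j).+2).

Definition F2 (j : nat) (lam : R) : 'M[R]_((2 * m).+1) :=
  1%:M + lam *: (munit 0 (2 * j).+1 - 2%:R *: munit (2 * j).+2 0
                 - lam *: munit (2 * j).+2 (2 * j).+1).

Definition EO_odd_gens (M : 'M[R]_((2 * m).+1)) : Prop :=
  exists j lam, (j < m)%N /\ (M = F1 j lam \/ M = F2 j lam).

Definition EO_odd : 'M[R]_((2 * m).+1) -> Prop := gen_grp EO_odd_gens.

End Defs.

(* For Q = R an R-linear alpha : Q -> R^m is z |-> z a with a = alpha(1), and the
   adjoint condition forces alpha^*(g) = g(a)/2; so the DSER generators are the maps
   E_a (and dually E^*_b) indexed by rows a of R^m.  For a = c e_j the matrix of E_a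
   is F^1_(j+1)(-c/2) (resp. F^2), so the two groups have the same coordinate
   generators, and every E_a is a product of coordinate ones because
   E_(u+v) = E_(v/2) E_u E_(-v/2) E_v. *)

From HB Require Import structures.
From mathcomp Require Import all_boot all_order all_algebra zify ring.
Set Implicit Arguments. Unset Strict Implicit. Unset Printing Implicit Defensive.
Import GRing.Theory.
Local Open Scope ring_scope.

Section GeneratedGroup.
Variables (R : comUnitRingType) (n : nat).
Implicit Types S T : 'M[R]_n -> Prop.

Lemma gen_grp_min S T :
  (forall A, S A -> gen_grp T A) -> forall A, gen_grp S A -> gen_grp T A.
Proof.
move=> sST A; elim=> [|B /sST //|B C _ TB _ TC|B _ TB].
- exact: gen_one.
- exact: gen_mul.
- exact: gen_inv.
Qed.

Lemma gen_grp_eq S T :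
  (forall A, S A -> gen_grp T A) -> (forall A, T A -> gen_grp S A) ->
  forall A, gen_grp S A <-> gen_grp T A.
Proof. by move=> sST sTS A; split; apply: gen_grp_min. Qed.

End GeneratedGroup.

Lemma eq_double1 (i j : nat) : ((2 * i).+1 == (2 * j).+1) = (i == j).
Proof. by rewrite eqSS eqn_pmul2l. Qed.

Lemma eq_double2 (i j : nat) : ((2 * i).+2 == (2 * j).+2) = (i == j).
Proof. by rewrite !eqSS eqn_pmul2l. Qed.

Lemma neq_double12 (i j : nat) : ((2 * i).+1 == (2 * j).+2) = false.
Proof. by apply/eqP; lia. Qed.

Lemma neq_double21 (i j : nat) : ((2 * i).+2 == (2 * j).+1) = false.
Proof. by rewrite eq_sym neq_double12. Qed.

Section Pairing.
Variables (R : comUnitRingType) (m : nat).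

Lemma dpairC (g y : 'rV[R]_m) : dpair g y = dpair y g.
Proof. by apply: eq_bigr => i _; rewrite mulrC. Qed.

Lemma dpair_is_scalar (g : 'rV[R]_m) : scalar (dpair g).
Proof.
move=> c u v; rewrite /dpair mulr_sumr -big_split; apply: eq_bigr => i _.
by rewrite !mxE mulrDr mulrCA.
Qed.

Lemma dpair_delta (i : 'I_m) (y : 'rV[R]_m) : dpair (delta_mx 0 i) y = y 0 i.
Proof.
rewrite /dpair (bigD1 i) //= mxE !eqxx mul1r big1 ?addr0 // => j /negbTE ji.
by rewrite mxE ji andbF mul0r.
Qed.

Variable g : 'rV[R]_m.
HB.instance Definition _ :=
  GRing.isLinear.Build R 'rV[R]_m R^o *%R (@dpair R m g) (dpair_is_scalar g).

Lemma dpair0 : dpair g 0 = 0. Proof. exact: raddf0. Qed.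
Lemma dpairD : {morph dpair g : u v / u + v}. Proof. exact: raddfD. Qed.
Lemma dpairN : {morph dpair g : u / - u}. Proof. exact: raddfN. Qed.
Lemma dpairZ c u : dpair g (c *: u) = c * dpair g u. Proof. exact: scalarZ. Qed.

End Pairing.

HB.instance Definition _ (R : comUnitRingType) (m : nat) :=
  GRing.Lmodule.copy (elt R m) (R^o * 'rV[R]_m * 'rV[R]_m)%type.

Section Coordinates.
Variables (R : comUnitRingType) (m : nat).
Local Notation N := (2 * m).+1.
Local Notation basis := (basis_elt R).

Lemma elt_linE (c z z' : R) (y y' g g' : 'rV[R]_m) :
  c *: ((z, y, g) : elt R m) + (z', y', g') = (c * z + z', c *: y + y', c *: g + g').
Proof. by []. Qed.

Lemma dpair0l (y : 'rV[R]_m) : dpair 0 y = 0.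
Proof. by rewrite dpairC dpair0. Qed.

Lemma coordE (k : 'I_N) (z : R) (y g : 'rV[R]_m) : coord k (z, y, g) =
  (basis k).1.1 * z + dpair (basis k).1.2 y + dpair (basis k).2 g.
Proof.
rewrite /coord /basis_elt /=; case: eqP => [-> | _].
  by rewrite mul1r /dpair !big1 ?addr0 // => i _; rewrite mxE mul0r.
rewrite mul0r add0r /dpair -big_split; apply: eq_bigr => i _ /=; rewrite !mxE.
case: eqP => [->|_]; first by rewrite neq_double12 mul1r mul0r addr0.
by case: eqP => _; rewrite ?mulr1n ?mulr0n ?mul1r ?mul0r ?add0r ?addr0.
Qed.

Lemma coord_is_scalar (k : 'I_N) : scalar (@coord R m k).
Proof.
move=> c [[z y] g] [[z' y'] g']; rewrite !coordE /= !dpair_is_scalar.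
change (c *: (z : R^o)) with (c * z); ring.
Qed.

Variable k : 'I_N.
HB.instance Definition _ :=
  GRing.isLinear.Build R (elt R m) R^o *%R (@coord R m k) (coord_is_scalar k).

Lemma coordZ c (v : elt R m) : coord k (c *: v) = c * coord k v.
Proof. exact: scalarZ. Qed.

Lemma coord_sum (I : Type) (r : seq I) (P : pred I) (F : I -> elt R m) :
  coord k (\sum_(i <- r | P i) F i) = \sum_(i <- r | P i) coord k (F i).
Proof. exact: (big_morph _ (raddfD _) (raddf0 _)). Qed.

End Coordinates.

Section Basis.
Variables (R : comUnitRingType) (m : nat).
Local Notation N := (2 * m).+1.
Local Notation elt := (elt R m).
Local Notation basis := (basis_elt R).

Definition idx_x (i : 'I_m) : 'I_N := inord (2 * i).+1.
Definition idx_f (i : 'I_m) : 'I_N := inord (2 * i).+2.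

Lemma val_idx_x i : idx_x i = (2 * i).+1 :> nat.
Proof. by rewrite inordK //; have := ltn_ord i; lia. Qed.

Lemma val_idx_f i : idx_f i = (2 * i).+2 :> nat.
Proof. by rewrite inordK //; have := ltn_ord i; lia. Qed.

Lemma eq_idx_x (k : 'I_N) i : (k == idx_x i) = (k == (2 * i).+1 :> nat).
Proof. by rewrite -val_eqE /= val_idx_x. Qed.

Lemma eq_idx_f (k : 'I_N) i : (k == idx_f i) = (k == (2 * i).+2 :> nat).
Proof. by rewrite -val_eqE /= val_idx_f. Qed.

Lemma idx_cases (k : 'I_N) : k = ord0 \/ exists i, k = idx_x i \/ k = idx_f i.
Proof.
have [k0|[i ki]] : k = 0%N :> nat \/
    exists i, k = (2 * i).+1 :> nat \/ k = (2 * i).+2 :> nat.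
  elim: (k : nat) => [|n [->|[i [->|->]]]]; first by left.
  - by right; exists 0%N; left.
  - by right; exists i; right.
  - by right; exists i.+1; left; lia.
  by left; apply: val_inj.
have lt_im : (i < m)%N by case: ki (ltn_ord k) => ->; lia.
right; exists (Ordinal lt_im).
by case: ki => ki; [left | right]; apply/eqP; rewrite ?eq_idx_x ?eq_idx_f ki.
Qed.

Lemma basis_ord0 : basis (ord0 : 'I_N) = (1, 0, 0).
Proof. by congr (_, _, _); apply/rowP => i; rewrite !mxE. Qed.

Lemma basis_idx_x i : basis (idx_x i) = (0, delta_mx 0 i, 0).
Proof.
rewrite /basis_elt val_idx_x; congr (_, _, _); apply/rowP => j;
  by rewrite !mxE ?eq_double1 ?neq_double12 // eq_sym.
Qed.

Lemma basis_idx_f i : basis (idx_f i) = (0, 0, delta_mx 0 i).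
Proof.
rewrite /basis_elt val_idx_f; congr (_, _, _); apply/rowP => j;
  by rewrite !mxE ?eq_double2 ?neq_double21 // eq_sym.
Qed.

Lemma coord_ord0 (v : elt) : coord (ord0 : 'I_N) v = v.1.1.
Proof. by case: v => [[z y] g]; rewrite coordE basis_ord0 !dpair0l mul1r !addr0. Qed.

Lemma coord_idx_x i (v : elt) : coord (idx_x i) v = v.1.2 0 i.
Proof.
by case: v => [[z y] g]; rewrite coordE basis_idx_x dpair0l dpair_delta mul0r add0r addr0.
Qed.

Lemma coord_idx_f i (v : elt) : coord (idx_f i) v = v.2 0 i.
Proof.
by case: v => [[z y] g]; rewrite coordE basis_idx_f dpair0l dpair_delta mul0r !add0r.
Qed.

Lemma coord_basis (k l : 'I_N) : coord k (basis l) = (k == l)%:R.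
Proof.
case: (idx_cases l) => [->|[i [->|->]]].
- by rewrite basis_ord0 coordE !dpair0 mulr1 !addr0.
- by rewrite basis_idx_x coordE mulr0 !dpair0 add0r addr0 dpairC dpair_delta mxE eq_idx_x.
- by rewrite basis_idx_f coordE mulr0 !dpair0 !add0r dpairC dpair_delta mxE eq_idx_f.
Qed.

Lemma coord_inj (u v : elt) : (forall k, coord k u = coord k v) -> u = v.
Proof.
move: u v => [[z y] g] [[z' y'] g'] e; congr (_, _, _).
- by have := e ord0; rewrite !coord_ord0.
- by apply/rowP => i; have := e (idx_x i); rewrite !coord_idx_x.
- by apply/rowP => i; have := e (idx_f i); rewrite !coord_idx_f.
Qed.

Lemma elt_expansion (v : elt) : v = \sum_l coord l v *: basis l.
Proof.
apply: coord_inj => k; rewrite coord_sum.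
under eq_bigr do rewrite coordZ coord_basis mulr_natr mulrb eq_sym.
by rewrite -big_mkcond big_pred1_eq.
Qed.

End Basis.

Section MatrixOfMap.
Variables (R : comUnitRingType) (m : nat).
Local Notation elt := (elt R m).
Implicit Types f g : elt -> elt.

Lemma mx_of_ext f g : f =1 g -> mx_of f = mx_of g.
Proof. by move=> fg; apply/matrixP => k l; rewrite !mxE fg. Qed.

Lemma mx_of_id : mx_of (@id elt) = 1%:M.
Proof. by apply/matrixP => k l; rewrite !mxE coord_basis. Qed.

Lemma coord_mx_of f : linear f ->
  forall k v, coord k (f v) = \sum_l mx_of f k l * coord l v.
Proof.
move=> fL k v.
pose F : {linear elt -> elt} := HB.pack f (GRing.isLinear.Build _ _ _ _ f fL).
have fZ c u : f (c *: u) = c *: f u by exact: linearZ_LR F c u.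
rewrite {1}(elt_expansion v) (big_morph f (raddfD F) (raddf0 F)) coord_sum.
by apply: eq_bigr => l _; rewrite fZ coordZ mxE mulrC.
Qed.

Lemma mx_of_comp f g : linear f -> mx_of (f \o g) = mx_of f *m mx_of g.
Proof.
move=> fL; apply/matrixP => k l; rewrite !mxE (coord_mx_of fL).
by apply: eq_bigr => p _; rewrite [mx_of g p l]mxE.
Qed.

End MatrixOfMap.

Section DSER.
Variables (R : comUnitRingType) (m : nat).
Local Notation N := (2 * m).+1.
Local Notation elt := (elt R m).
Local Notation h := (half R).

Lemma gen_grp_row_family (S : 'M[R]_N -> Prop) (E : 'rV[R]_m -> elt -> elt) :
  (forall a, linear (E a)) -> (forall x, E 0 x = x) ->
  (forall u v, E (u + v) =1 E (h *: v) \o (E u \o (E (- (h *: v)) \o E v))) ->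
  (forall j c, gen_grp S (mx_of (E (c *: delta_mx 0 j)))) ->
  forall a, gen_grp S (mx_of (E a)).
Proof.
move=> EL E0 ED Edelta a.
(* Closure under sums uses scalar multiples of both summands, hence the [forall c]. *)
pose P a := forall c, gen_grp S (mx_of (E (c *: a))).
suff /(_ 1) : P a by rewrite scale1r.
rewrite (row_sum_delta a); apply: big_ind => [c|u v Pu Pv c|j _ c].
- by rewrite scaler0 (mx_of_ext E0) mx_of_id; apply: gen_one.
- rewrite scalerDr (mx_of_ext (ED _ _)) 3!(mx_of_comp _ (EL _)) !scalerA -scaleNr.
  by apply: gen_mul (Pv _) (gen_mul (Pu _) (gen_mul (Pv _) (Pv _))).
- by rewrite scalerA.
Qed.

Definition E_alpha_row (a : 'rV[R]_m) : elt -> elt :=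
  E_alpha (fun z => z *: a) (fun g => h * dpair g a).

Definition E_beta_row (b : 'rV[R]_m) : elt -> elt :=
  E_beta (fun z => z *: b) (fun y => h * dpair b y).

Lemma E_alpha_row_linear a : linear (E_alpha_row a).
Proof.
move=> c [[z y] g] [[z' y'] g'].
rewrite /E_alpha_row /E_alpha elt_linE /= elt_linE !(dpairC _ a) dpair_is_scalar.
by congr (_, _, _); [ring | apply/rowP => i; rewrite !mxE; ring].
Qed.

Lemma E_beta_row_linear b : linear (E_beta_row b).
Proof.
move=> c [[z y] g] [[z' y'] g'].
rewrite /E_beta_row /E_beta elt_linE /= elt_linE dpair_is_scalar.
by congr (_, _, _); [ring | apply/rowP => i; rewrite !mxE; ring].
Qed.

Lemma E_alpha_row0 x : E_alpha_row 0 x = x.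
Proof.
case: x => [[z y] g]; rewrite /E_alpha_row /E_alpha /= dpair0.
by rewrite !(mulr0, subr0, scaler0, scale0r, addr0).
Qed.

Lemma E_beta_row0 x : E_beta_row 0 x = x.
Proof.
case: x => [[z y] g]; rewrite /E_beta_row /E_beta /= dpair0l.
by rewrite !(mulr0, subr0, scaler0, scale0r, addr0).
Qed.

Lemma coord_E_alpha_row k a (v : elt) : coord k (E_alpha_row a v) =
  coord k v + v.1.1 * dpair (basis_elt R k).1.2 a
  - h * dpair v.2 a * ((basis_elt R k).1.1 + h * dpair (basis_elt R k).1.2 a).
Proof.
case: v => [[z y] g]; rewrite !coordE /= !(dpairD, dpairN, dpairZ); ring.
Qed.

Lemma coord_E_beta_row k b (v : elt) : coord k (E_beta_row b v) =
  coord k v + v.1.1 * dpair (basis_elt R k).2 b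
  - h * dpair b v.1.2 * ((basis_elt R k).1.1 + h * dpair (basis_elt R k).2 b).
Proof.
case: v => [[z y] g]; rewrite !coordE /= !(dpairD, dpairN, dpairZ); ring.
Qed.

Lemma dpair_basis_x_delta k (c : R) (j : 'I_m) :
  dpair (basis_elt R k).1.2 (c *: delta_mx 0 j) = c * (k == (2 * j).+1 :> nat)%:R.
Proof. by rewrite dpairZ dpairC dpair_delta mxE. Qed.

Lemma dpair_basis_f_delta k (c : R) (j : 'I_m) :
  dpair (basis_elt R k).2 (c *: delta_mx 0 j) = c * (k == (2 * j).+2 :> nat)%:R.
Proof. by rewrite dpairZ dpairC dpair_delta mxE. Qed.

Lemma linR_scale (a : 'rV[R]_m) : linR (fun z : R => z *: a).
Proof. by split=> [z z' | c z]; rewrite ?scalerDl ?scalerA. Qed.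

Hypothesis h2 : (2%:R : R) \is a GRing.unit.

Lemma mul_half2 : h * 2%:R = 1.
Proof. exact: mulVr. Qed.

(* [ring] cannot use [2 * h = 1]; instead exhibit [P - Q] as a multiple of [2 h - 1]. *)
Lemma eq_mod_half (P Q D : R) : P - Q = (h * 2%:R - 1) * D -> P = Q.
Proof. by rewrite mul_half2 subrr mul0r => /eqP; rewrite subr_eq0 => /eqP. Qed.

Lemma mul_half_bQ1 (z : R) : h * bQ z 1 = z.
Proof. by rewrite /bQ mulr1 mulrA mul_half2 mul1r. Qed.

Lemma bQ_half z c : bQ (h * c) z = z * c.
Proof. by rewrite /bQ mulrA [2%:R * h]mulrC mul_half2 mul1r mulrC. Qed.

Lemma mx_of_E_alpha_row_delta j c :
  mx_of (E_alpha_row (c *: delta_mx 0 j)) = F1 m j (- (h * c)).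
Proof.
apply/matrixP => k l; rewrite mxE coord_E_alpha_row coord_basis.
rewrite dpair_basis_x_delta dpair_basis_f_delta /F1 /munit !mxE /= -!mulnb !natrM.
apply: (eq_mod_half (D := - c * ((k : nat) == (2 * j).+1)%:R * ((l : nat) == 0)%:R)).
ring.
Qed.

Lemma mx_of_E_beta_row_delta j c :
  mx_of (E_beta_row (c *: delta_mx 0 j)) = F2 m j (- (h * c)).
Proof.
apply/matrixP => k l; rewrite mxE coord_E_beta_row coord_basis dpair_basis_f_delta.
rewrite dpairC dpair_basis_x_delta /F2 /munit !mxE /= -!mulnb !natrM.
apply: (eq_mod_half (D := - c * ((k : nat) == (2 * j).+2)%:R * ((l : nat) == 0)%:R)).
ring.
Qed.

Lemma E_alpha_rowD u v : E_alpha_row (u + v) =1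
  E_alpha_row (h *: v) \o (E_alpha_row u \o (E_alpha_row (- (h *: v)) \o E_alpha_row v)).
Proof.
case=> [[z y] g]; rewrite /E_alpha_row /E_alpha /= !(dpairD, dpairN, dpairZ).
congr (_, _, _); first ring.
apply/rowP => i; rewrite !mxE.
by apply: (eq_mod_half (D := v 0 i * h ^+ 3 * dpair g v - u 0 i * dpair g v * h)); ring.
Qed.

Lemma E_beta_rowD u v : E_beta_row (u + v) =1
  E_beta_row (h *: v) \o (E_beta_row u \o (E_beta_row (- (h *: v)) \o E_beta_row v)).
Proof.
case=> [[z y] g]; rewrite /E_beta_row /E_beta /= !(dpairC _ y) !(dpairD, dpairN, dpairZ).
congr (_, _, _); first ring.
apply/rowP => i; rewrite !mxE.
by apply: (eq_mod_half (D := v 0 i * h ^+ 3 * dpair y v - u 0 i * dpair y v * h)); ring.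
Qed.

Lemma E_alpha_row_odd a : EO_odd (mx_of (E_alpha_row a)).
Proof.
apply: gen_grp_row_family a; [exact: E_alpha_row_linear | exact: E_alpha_row0 |
  exact: E_alpha_rowD |] => j c.
apply: gen_el; exists (j : nat), (- (h * c)); split; first exact: ltn_ord.
by left; rewrite mx_of_E_alpha_row_delta.
Qed.

Lemma E_beta_row_odd b : EO_odd (mx_of (E_beta_row b)).
Proof.
apply: gen_grp_row_family b; [exact: E_beta_row_linear | exact: E_beta_row0 |
  exact: E_beta_rowD |] => j c.
apply: gen_el; exists (j : nat), (- (h * c)); split; first exact: ltn_ord.
by right; rewrite mx_of_E_beta_row_delta.
Qed.

Lemma E_alpha_row_of alpha alphas : linR alpha ->
  (forall g z, bQ (alphas g) z = dpair g (alpha z)) ->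
  E_alpha alpha alphas =1 E_alpha_row (alpha 1).
Proof.
move=> [_ alphaZ] adj [[z y] g].
have alphaE z' : alpha z' = z' *: alpha 1 by rewrite -alphaZ mulr1.
by rewrite /E_alpha_row /E_alpha /= -adj mul_half_bQ1 (alphaE z) (alphaE (alphas g)).
Qed.

Lemma E_beta_row_of beta betas : linR beta ->
  (forall y z, bQ (betas y) z = dpair (beta z) y) ->
  E_beta beta betas =1 E_beta_row (beta 1).
Proof.
move=> [_ betaZ] adj [[z y] g].
have betaE z' : beta z' = z' *: beta 1 by rewrite -betaZ mulr1.
by rewrite /E_beta_row /E_beta /= -adj mul_half_bQ1 (betaE z) (betaE (betas y)).
Qed.

Lemma E_alpha_row_gen a : EO_R_gens (mx_of (E_alpha_row a)).
Proof.
left; exists (fun z => z *: a), (fun g => h * dpair g a).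
by split; [exact: linR_scale | split=> // g z; rewrite bQ_half dpairZ].
Qed.

Lemma E_beta_row_gen b : EO_R_gens (mx_of (E_beta_row b)).
Proof.
right; exists (fun z => z *: b), (fun y => h * dpair b y).
split; first exact: linR_scale.
by split=> // y z; rewrite bQ_half [dpair (_ *: _) _]dpairC dpairZ dpairC.
Qed.

Lemma EO_R_gens_odd (M : 'M[R]_N) : EO_R_gens M -> EO_odd M.
Proof.
case=> [[al [als [alL [adj ->]]]] | [be [bes [beL [adj ->]]]]].
- by rewrite (mx_of_ext (E_alpha_row_of alL adj)); apply: E_alpha_row_odd.
- by rewrite (mx_of_ext (E_beta_row_of beL adj)); apply: E_beta_row_odd.
Qed.

Lemma EO_odd_gens_R (M : 'M[R]_N) : EO_odd_gens M -> EO_R M.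
Proof.
have lamE lam : lam = - (h * - (2%:R * lam)).
  by rewrite mulrN opprK mulrA mul_half2 ?mul1r.
case=> j [lam [ltjm [->|->]]]; apply: gen_el; rewrite [lam]lamE.
- by rewrite -(mx_of_E_alpha_row_delta (Ordinal ltjm)); apply: E_alpha_row_gen.
- by rewrite -(mx_of_E_beta_row_delta (Ordinal ltjm)); apply: E_beta_row_gen.
Qed.

End DSER.

Theorem mainTheorem4 (R : comUnitRingType) (m : nat)
  (h2 : (2%:R : R) \is a GRing.unit) (hm : (1 <= m)%N) :
  forall M : 'M[R]_((2 * m).+1), EO_R M <-> EO_odd M.
Proof.
by apply: gen_grp_eq => M; [apply: EO_R_gens_odd | apply: EO_odd_gens_R].
Qed.
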